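(* Let $(X,\le)$ be a poset, $E$ an equivalence relation on $X$ with ${\le}\subseteq E$, and $\alpha:X\to X$ an order automorphism of $(X,\le)$ with $\alpha\subseteq E$. Set $0=\alpha\circ({\le}^c)^\smile=({\le}^c)^\smile\circ\alpha$. Then for all $R\in\mathsf{Up}(\mathbf E)$: (i) ${\sim}^nR=(\alpha^\smile)^{\frac{n-1}{2}}\circ(R^c)^\smile\circ\alpha^{\frac{n+1}{2}}$ for all odd $n\ge1$; (ii) ${\sim}^nR=(\alpha^\smile)^{\frac n2}\circ R\circ\alpha^{\frac n2}$ for all even $n\ge2$; (iii) $-^nR=\alpha^{\frac{n+1}{2}}\circ(R^c)^\smile\circ(\alpha^\smile)^{\frac{n-1}{2}}$ for all odd $n\ge1$; (iv) $-^nR=\alpha^{\frac n2}\circ R\circ(\alpha^\smile)^{\frac n2}$ for all even $n\ge2$.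
   Context: For binary relations: converse $R^\smile=\{(x,y)\mid(y,x)\in R\}$; composition $R\circ S=\{(x,y)\mid\exists z\,((x,z)\in R,(z,y)\in S)\}$; $R^0=\mathrm{id}_X$, $R^{k+1}=R^k\circ R$. A function $\alpha$ is identified with its graph. For a poset $(X,\le)$ and an equivalence relation $E\supseteq{\le}$, $E$ is partially ordered by $(u,v)\preceq(x,y)$ iff $x\le u$ and $v\le y$; $\mathbf E=(E,\preceq)$ and $\mathsf{Up}(\mathbf E)$ is its set of up-sets. For $R\subseteq E$, $R^c=E\setminus R$. On $\mathsf{Up}(\mathbf E)$ define $R\backslash S=(R^\smile\circ S^c)^c$, $R/S=(R^c\circ S^\smile)^c$, ${\sim}R=R\backslash 0$, $-R=0/R$; ${\sim}^n$, $-^n$ are $n$-fold applications. An order automorphism is a bijection $\alpha$ with $x\le y\iff\alpha(x)\le\alpha(y)$. *)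

From Stdlib Require Import Arith.

Definition relX (X : Type) := X -> X -> Prop.

Definition rel_eq {X : Type} (R S : relX X) : Prop := forall x y, R x y <-> S x y.

Definition converse {X : Type} (R : relX X) : relX X := fun x y => R y x.

Definition rcomp {X : Type} (R S : relX X) : relX X :=
  fun x y => exists z, R x z /\ S z y.

Definition idrel (X : Type) : relX X := fun x y => x = y.

Fixpoint rpow {X : Type} (R : relX X) (k : nat) : relX X :=
  match k with
  | 0 => idrel X
  | S k' => rcomp (rpow R k') R
  end.

Definition graph {X : Type} (f : X -> X) : relX X := fun x y => y = f x.

Definition is_poset {X : Type} (le : relX X) : Prop :=
  (forall x, le x x) /\
  (forall x y, le x y -> le y x -> x = y) /\
  (forall x y z, le x y -> le y z -> le x z).

Definition is_equivalence {X : Type} (E : relX X) : Prop :=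
  (forall x, E x x) /\
  (forall x y, E x y -> E y x) /\
  (forall x y z, E x y -> E y z -> E x z).

Definition subrel {X : Type} (R S : relX X) : Prop := forall x y, R x y -> S x y.

Definition order_automorphism {X : Type} (le : relX X) (a : X -> X) : Prop :=
  (forall x y, a x = a y -> x = y) /\
  (forall y, exists x, a x = y) /\
  (forall x y, le x y <-> le (a x) (a y)).

(* complement relative to E : R^c = E \ R *)
Definition rcompl {X : Type} (E R : relX X) : relX X :=
  fun x y => E x y /\ ~ R x y.

(* up-sets of (E, preceq), where (u,v) preceq (x,y) iff x <= u and v <= y *)
Definition UpE {X : Type} (le E : relX X) (R : relX X) : Prop :=
  subrel R E /\
  (forall u v x y, R u v -> E x y -> le x u -> le v y -> R x y).

Definition ldiv {X : Type} (E R S : relX X) : relX X :=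
  rcompl E (rcomp (converse R) (rcompl E S)).
Definition rdiv {X : Type} (E R S : relX X) : relX X :=
  rcompl E (rcomp (rcompl E R) (converse S)).

Definition zero_rel {X : Type} (le E : relX X) (a : X -> X) : relX X :=
  rcomp (graph a) (converse (rcompl E le)).

Definition tilde {X : Type} (le E : relX X) (a : X -> X) (R : relX X) : relX X :=
  ldiv E R (zero_rel le E a).
Definition minus {X : Type} (le E : relX X) (a : X -> X) (R : relX X) : relX X :=
  rdiv E (zero_rel le E a) R.

Definition iter_op {X : Type} (f : relX X -> relX X) (n : nat) (R : relX X) : relX X :=
  Nat.iter n f R.

From Stdlib Require Import Arith Lia Setoid Classical.

(* Relative to E, the complement of 0 is α ∘ ≥.  Hence on up-sets the residuals compute
   to ~R = (R^c)˘ ∘ α and -R = α ∘ (R^c)˘, and Up(E), which contains 0 and is closed under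
   residuals, is closed under both operations.  Applying either one twice and using that α
   is a bijection gives ~~R = α˘ ∘ R ∘ α and --R = α ∘ R ∘ α˘ (recovering R from its double
   complement is the classical step); the four formulas follow by induction on n/2. *)

Lemma rpow_graph_iff {X : Type} (f : X -> X) (k : nat) (x y : X) :
  rpow (graph f) k x y <-> y = Nat.iter k f x.
Proof.
  revert y; induction k as [|k IH]; intros y; simpl.
  - unfold idrel; split; intros; congruence.
  - unfold rcomp, graph; split.
    + intros [z [Hz ->]]. apply IH in Hz. now subst.
    + intros ->. exists (Nat.iter k f x). now rewrite IH.
Qed.

Lemma rpow_converse_graph_iff {X : Type} (f : X -> X) (k : nat) (x y : X) :
  rpow (converse (graph f)) k x y <-> x = Nat.iter k f y.
Proof.
  revert x y; induction k as [|k IH]; intros x y; cbn [rpow].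
  - simpl; unfold idrel; split; intros; congruence.
  - unfold rcomp, converse, graph; rewrite Nat.iter_succ_r; split.
    + intros [z [Hz ->]]. now apply IH.
    + intros ->. exists (f y). now rewrite IH.
Qed.

Lemma rcomp_rpow_converse_graph_iff {X : Type} (f : X -> X) (k l : nat)
  (S : relX X) (x y : X) :
  rcomp (rcomp (rpow (converse (graph f)) k) S) (rpow (graph f) l) x y <->
  exists u v, x = Nat.iter k f u /\ y = Nat.iter l f v /\ S u v.
Proof.
  unfold rcomp; setoid_rewrite rpow_converse_graph_iff; setoid_rewrite rpow_graph_iff.
  firstorder.
Qed.

Lemma rcomp_rpow_graph_iff {X : Type} (f : X -> X) (k l : nat)
  (S : relX X) (x y : X) :
  rcomp (rcomp (rpow (graph f) k) S) (rpow (converse (graph f)) l) x y <->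
  S (Nat.iter k f x) (Nat.iter l f y).
Proof.
  unfold rcomp; setoid_rewrite rpow_converse_graph_iff; setoid_rewrite rpow_graph_iff.
  split.
  - now intros [v [[u [-> HS]] ->]].
  - intros HS. eauto.
Qed.

Lemma iter_op_add_1 {X : Type} (f : relX X -> relX X) (n : nat) (R : relX X) :
  iter_op f (n + 1) R = iter_op f n (f R).
Proof. apply Nat.iter_add. Qed.

Lemma half_double (k : nat) : 2 * k / 2 = k.
Proof. rewrite Nat.mul_comm. now apply Nat.div_mul. Qed.

Lemma half_odd_pred (m : nat) : (2 * m + 1 - 1) / 2 = m.
Proof. replace (2 * m + 1 - 1) with (2 * m) by lia. apply half_double. Qed.

Lemma half_odd_succ (m : nat) : (2 * m + 1 + 1) / 2 = S m.
Proof. replace (2 * m + 1 + 1) with (2 * S m) by lia. apply half_double. Qed.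

Section UpSets.

Variables (X : Type) (le E : relX X).
Hypotheses (le_refl : forall x, le x x) (le_sub_E : forall x y, le x y -> E x y)
  (E_sym : forall x y, E x y -> E y x)
  (E_trans : forall x y z, E x y -> E y z -> E x z).

Lemma UpE_ldiv (R S : relX X) : UpE le E R -> UpE le E S -> UpE le E (ldiv E R S).
Proof.
  intros [RE Rup] [SE Sup]. split; [now intros x y []|].
  intros u v x y [Euv Hn] Exy Hxu Hvy. split; [exact Exy|].
  intros [z [Rzx [Ezy NSzy]]]. apply Hn. exists z.
  assert (Ezu : E z u) by eauto.
  split; [apply (Rup z x); auto|split; [eauto|]].
  intros Szv. apply NSzy. apply (Sup z v); auto.
Qed.

Lemma UpE_rdiv (R S : relX X) : UpE le E R -> UpE le E S -> UpE le E (rdiv E R S).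
Proof.
  intros [RE Rup] [SE Sup]. split; [now intros x y []|].
  intros u v x y [Euv Hn] Exy Hxu Hvy. split; [exact Exy|].
  intros [z [[Exz NRxz] Syz]]. apply Hn. exists z.
  assert (Evz : E v z) by eauto.
  split; [split; [eauto|]|apply (Sup y z); auto].
  intros Ruz. apply NRxz. apply (Rup u z); auto.
Qed.

Variable a : X -> X.
Hypotheses (le_trans : forall x y z, le x y -> le y z -> le x z)
  (a_inj : forall x y, a x = a y -> x = y) (a_surj : forall y, exists x, a x = y)
  (a_mono : forall x y, le x y <-> le (a x) (a y)) (E_a : forall x, E x (a x)).

Lemma zero_compl_iff (z y : X) :
  rcompl E (zero_rel le E a) z y <-> le y (a z).
Proof.
  unfold rcompl, zero_rel, rcomp, converse, graph. split.
  - intros [Ezy Hn]. apply NNPP. intros Hyaz. apply Hn. exists (a z).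
    split; [reflexivity|split; eauto].
  - intros Hyaz. split; [eauto|]. now intros [w [-> [_ Hn]]].
Qed.

Lemma UpE_zero : UpE le E (zero_rel le E a).
Proof.
  split.
  - intros x y [w [-> [Eyw _]]]. eauto.
  - intros u v x y [w [-> [Evw Hn]]] Exy Hxu Hvy. exists (a x).
    split; [reflexivity|split; [eauto|]].
    intros Hyax. apply Hn. apply le_trans with y; [exact Hvy|].
    apply le_trans with (a x); [exact Hyax|]. now apply a_mono in Hxu.
Qed.

Lemma tilde_iff_not_le (R : relX X) (x y : X) :
  tilde le E a R x y <-> E x y /\ ~ exists z, R z x /\ le y (a z).
Proof.
  unfold tilde, ldiv, rcomp, converse. unfold rcompl at 1.
  now setoid_rewrite zero_compl_iff.
Qed.

Lemma minus_iff_not_le (R : relX X) (x y : X) :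
  minus le E a R x y <-> E x y /\ ~ exists z, le z (a x) /\ R y z.
Proof.
  unfold minus, rdiv, rcomp, converse. unfold rcompl at 1.
  now setoid_rewrite zero_compl_iff.
Qed.

Lemma tilde_iff (R : relX X) (HR : UpE le E R) (x y : X) :
  tilde le E a R x y <-> exists w, y = a w /\ rcompl E R w x.
Proof.
  destruct HR as [RE Rup]. rewrite tilde_iff_not_le. split.
  - intros [Exy Hn]. destruct (a_surj y) as [w <-].
    exists w. split; [reflexivity|split; [eauto|]].
    intros Rwx. apply Hn. exists w. auto.
  - intros [w [-> [Ewx NRwx]]]. split; [eauto|].
    intros [z [Rzx Hle]]. apply NRwx. apply (Rup z x); auto. now apply a_mono.
Qed.

Lemma minus_iff (R : relX X) (HR : UpE le E R) (x y : X) :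
  minus le E a R x y <-> rcompl E R y (a x).
Proof.
  destruct HR as [RE Rup]. rewrite minus_iff_not_le. split.
  - intros [Exy Hn]. split; [eauto|]. intros Ryax. apply Hn. exists (a x). auto.
  - intros [Eyax NRyax]. split; [eauto|].
    intros [z [Hle Ryz]]. apply NRyax. apply (Rup y z); auto.
Qed.

Lemma UpE_tilde (R : relX X) : UpE le E R -> UpE le E (tilde le E a R).
Proof. intros HR. exact (UpE_ldiv R _ HR UpE_zero). Qed.

Lemma UpE_minus (R : relX X) : UpE le E R -> UpE le E (minus le E a R).
Proof. intros HR. exact (UpE_rdiv _ R UpE_zero HR). Qed.

Lemma tilde_tilde_iff (R : relX X) (HR : UpE le E R) (x y : X) :
  tilde le E a (tilde le E a R) x y <-> exists u v, x = a u /\ y = a v /\ R u v.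
Proof.
  rewrite (tilde_iff _ (UpE_tilde R HR)). unfold rcompl at 1.
  setoid_rewrite (tilde_iff R HR). destruct HR as [RE _]. split.
  - intros [v [-> [Evx Hn]]]. destruct (a_surj x) as [u <-].
    exists u, v. split; [reflexivity|split; [reflexivity|]].
    apply NNPP. intros NRuv. apply Hn. exists u. split; [reflexivity|split; eauto].
  - intros [u [v [-> [-> Ruv]]]]. exists v. split; [reflexivity|split; [eauto|]].
    intros [w [Hw [_ NRwv]]]. apply a_inj in Hw. now subst.
Qed.

Lemma minus_minus_iff (R : relX X) (HR : UpE le E R) (x y : X) :
  minus le E a (minus le E a R) x y <-> R (a x) (a y).
Proof.
  rewrite (minus_iff _ (UpE_minus R HR)). unfold rcompl at 1.
  rewrite (minus_iff R HR). destruct HR as [RE _]. unfold rcompl. split.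
  - intros [Eyax Hn]. apply NNPP. intros NR. apply Hn. split; eauto.
  - intros Raxay. split; [eauto|tauto].
Qed.

Lemma iter_tilde_double (R : relX X) (HR : UpE le E R) (k : nat) (x y : X) :
  iter_op (tilde le E a) (2 * k) R x y <->
  exists u v, x = Nat.iter k a u /\ y = Nat.iter k a v /\ R u v.
Proof.
  unfold iter_op. revert x y; induction k as [|k IH]; intros x y.
  - split; [now exists x, y|now intros [u [v [-> [-> Ruv]]]]].
  - replace (2 * S k) with (S (S (2 * k))) by lia. rewrite !Nat.iter_succ.
    rewrite tilde_tilde_iff by (apply Nat.iter_invariant; auto using UpE_tilde).
    setoid_rewrite IH. split.
    + intros (u' & v' & -> & -> & u & v & -> & -> & Ruv). now exists u, v.
    + intros (u & v & -> & -> & Ruv). exists (Nat.iter k a u), (Nat.iter k a v).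
      split; [reflexivity|split; [reflexivity|now exists u, v]].
Qed.

Lemma iter_minus_double (R : relX X) (HR : UpE le E R) (k : nat) (x y : X) :
  iter_op (minus le E a) (2 * k) R x y <-> R (Nat.iter k a x) (Nat.iter k a y).
Proof.
  unfold iter_op. revert x y; induction k as [|k IH]; intros x y; [reflexivity|].
  replace (2 * S k) with (S (S (2 * k))) by lia.
  rewrite (Nat.iter_succ_r k _ a x), (Nat.iter_succ_r k _ a y), <- IH, !Nat.iter_succ.
  apply minus_minus_iff, Nat.iter_invariant; auto using UpE_minus.
Qed.

Lemma iter_tilde_odd (R : relX X) (HR : UpE le E R) (m : nat) (x y : X) :
  iter_op (tilde le E a) (2 * m + 1) R x y <->
  exists u v, x = Nat.iter m a u /\ y = Nat.iter (S m) a v /\ rcompl E R v u.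
Proof.
  rewrite iter_op_add_1, (iter_tilde_double _ (UpE_tilde R HR)).
  setoid_rewrite (tilde_iff R HR). setoid_rewrite Nat.iter_succ_r. split.
  - intros (u & v' & -> & -> & v & -> & NRvu). now exists u, v.
  - intros (u & v & -> & -> & NRvu). exists u, (a v).
    split; [reflexivity|split; [reflexivity|now exists v]].
Qed.

Lemma iter_minus_odd (R : relX X) (HR : UpE le E R) (m : nat) (x y : X) :
  iter_op (minus le E a) (2 * m + 1) R x y <->
  rcompl E R (Nat.iter m a y) (Nat.iter (S m) a x).
Proof.
  rewrite iter_op_add_1, (iter_minus_double _ (UpE_minus R HR)). apply (minus_iff R HR).
Qed.

End UpSets.

Theorem lemma3p11 (X : Type) (le E : X -> X -> Prop) (a : X -> X) :
  is_poset le ->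
  is_equivalence E ->
  subrel le E ->
  order_automorphism le a ->
  subrel (graph a) E ->
  forall R : X -> X -> Prop, UpE le E R ->
    (forall n, Nat.odd n = true ->
       rel_eq (iter_op (tilde le E a) n R)
         (rcomp (rcomp (rpow (converse (graph a)) ((n - 1) / 2))
                       (converse (rcompl E R)))
                (rpow (graph a) ((n + 1) / 2)))) /\
    (forall n, Nat.even n = true -> 2 <= n ->
       rel_eq (iter_op (tilde le E a) n R)
         (rcomp (rcomp (rpow (converse (graph a)) (n / 2)) R)
                (rpow (graph a) (n / 2)))) /\
    (forall n, Nat.odd n = true ->
       rel_eq (iter_op (minus le E a) n R)
         (rcomp (rcomp (rpow (graph a) ((n + 1) / 2))
                       (converse (rcompl E R)))
                (rpow (converse (graph a)) ((n - 1) / 2)))) /\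
    (forall n, Nat.even n = true -> 2 <= n ->
       rel_eq (iter_op (minus le E a) n R)
         (rcomp (rcomp (rpow (graph a) (n / 2)) R)
                (rpow (converse (graph a)) (n / 2)))).
Proof.
  intros [le_refl [_ le_trans]] [_ [E_sym E_trans]] le_sub_E [a_inj [a_surj a_mono]]
    a_sub_E R HR.
  assert (E_a : forall x, E x (a x)) by (intros x; now apply a_sub_E).
  (* The even identities hold for n = 0 too. *)
  split; [|split; [|split]].
  - intros n Hodd x y. apply Nat.odd_spec in Hodd as [m ->].
    rewrite half_odd_pred, half_odd_succ.
    rewrite rcomp_rpow_converse_graph_iff, iter_tilde_odd by assumption. reflexivity.
  - intros n Heven _ x y. apply Nat.even_spec in Heven as [k ->]. rewrite half_double.
    rewrite rcomp_rpow_converse_graph_iff, iter_tilde_double by assumption. reflexivity.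
  - intros n Hodd x y. apply Nat.odd_spec in Hodd as [m ->].
    rewrite half_odd_pred, half_odd_succ.
    rewrite rcomp_rpow_graph_iff, iter_minus_odd by assumption. reflexivity.
  - intros n Heven _ x y. apply Nat.even_spec in Heven as [k ->]. rewrite half_double.
    rewrite rcomp_rpow_graph_iff, iter_minus_double by assumption. reflexivity.
Qed.
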